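(* Assume $p=0.5$ and $e_{-1}+e_{+1}<1$. Let $\mathcal F$ be a class of measurable classifiers $f:\mathcal X\to\{-1,+1\}$, and let $\tilde f^*\in\arg\min_{f\in\mathcal F}\mathbb E_{\tilde{\mathcal D}}[\mathbb 1_{\mathrm{peer}}(f(X),\tilde Y)]$. Then $\tilde f^*\in\arg\min_{f\in\mathcal F}R_{\mathcal D}(f)$, where $R_{\mathcal D}(f)=\mathbb P_{(X,Y)\sim\mathcal D}(f(X)\neq Y)$.
   Context: Let $\mathcal X\subseteq\mathbb R^d$ and let $(X,Y)$ be a random pair with distribution $\mathcal D$ on $\mathcal X\times\{-1,+1\}$, with $p:=\mathbb P(Y=+1)$. A noisy label $\tilde Y\in\{-1,+1\}$ is generated with noise rates $e_{+1}:=\mathbb P(\tilde Y=-1\mid Y=+1)$, $e_{-1}:=\mathbb P(\tilde Y=+1\mid Y=-1)$, where $\tilde Y$ is conditionally independent of $X$ given $Y$; $\tilde{\mathcal D}$ is the distribution of $(X,\tilde Y)$. The 0-1 loss is $\mathbb 1(a,b)=1$ if $a\neq b$ and $0$ otherwise. The expected 0-1 peer loss of $f$ on $\tilde{\mathcal D}$ is $$\mathbb E_{\tilde{\mathcal D}}[\mathbb 1_{\mathrm{peer}}(f(X),\tilde Y)]:=\mathbb E[\mathbb 1(f(X),\tilde Y)]-\mathbb E[\mathbb 1(f(X_1),\tilde Y_2)],$$ where $(X,\tilde Y),(X_1,\tilde Y_1),(X_2,\tilde Y_2)$ are i.i.d. draws from $\tilde{\mathcal D}$. *)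

From HB Require Import structures.
From mathcomp Require Import all_boot all_order all_algebra.
From mathcomp Require Import all_classical all_reals all_analysis.
Set Implicit Arguments. Unset Strict Implicit. Unset Printing Implicit Defensive.
Import Order.TTheory GRing.Theory Num.Theory.
Local Open Scope classical_set_scope.
Local Open Scope ring_scope.

(* Labels in {-1,+1} are encoded by bool: true <-> +1, false <-> -1.
   The primitive object is the joint law Q of the triple (X, Y, Ytilde) on
   T * (bool * bool); a point is w = (x, (y, ytilde)). *)

Section PeerLoss.
Context (R : realType) (d : measure_display) (T : measurableType d).
Implicit Types (Q : probability (T * (bool * bool))%type R).

Definition clean_pair (w : T * (bool * bool)) : (T * bool)%type := (w.1, w.2.1).
Definition noisy_pair (w : T * (bool * bool)) : (T * bool)%type := (w.1, w.2.2).

Lemma measurable_clean_pair : measurable_fun setT clean_pair.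
Proof.
apply/measurable_fun_pairP; split; first exact: measurable_fst.
exact: (measurableT_comp measurable_fst measurable_snd).
Qed.

Lemma measurable_noisy_pair : measurable_fun setT noisy_pair.
Proof.
apply/measurable_fun_pairP; split; first exact: measurable_fst.
exact: (measurableT_comp measurable_snd measurable_snd).
Qed.

HB.instance Definition _ := isMeasurableFun.Build _ _ _ _ clean_pair
  measurable_clean_pair.
HB.instance Definition _ := isMeasurableFun.Build _ _ _ _ noisy_pair
  measurable_noisy_pair.

Definition cleanD Q := distribution Q clean_pair.
Definition noisyD Q := distribution Q noisy_pair.

Definition prob_pos Q : \bar R := Q [set w | w.2.1 = true].

Definition e_plus Q : R :=
  fine (Q [set w | w.2.1 = true /\ w.2.2 = false]) / fine (Q [set w | w.2.1 = true]).
Definition e_minus Q : R :=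
  fine (Q [set w | w.2.1 = false /\ w.2.2 = true]) / fine (Q [set w | w.2.1 = false]).

(* Ytilde is conditionally independent of X given Y:
   P(X in A, Y = y, Ytilde = yt) P(Y = y) = P(X in A, Y = y) P(Y = y, Ytilde = yt) *)
Definition cond_indep Q : Prop :=
  forall (A : set T) (y yt : bool), measurable A ->
    (Q [set w | A w.1 /\ w.2.1 = y /\ w.2.2 = yt] * Q [set w | w.2.1 = y]
     = Q [set w | A w.1 /\ w.2.1 = y] * Q [set w | w.2.1 = y /\ w.2.2 = yt])%E.

Definition loss01 (a b : bool) : R := (a != b)%:R.

(* expected 0-1 peer loss on Dt:
   E[1(f X, Yt)] - E[1(f X1, Yt2)], (X1,Yt1),(X2,Yt2) i.i.d. ~ Dt *)
Definition peer_risk Q (f : T -> bool) : \bar R :=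
  (\int[noisyD Q]_z (loss01 (f z.1) z.2)%:E
   - \int[(noisyD Q \x noisyD Q)%E]_zz (loss01 (f zz.1.1) zz.2.2)%:E)%E.

Definition clean_risk Q (f : T -> bool) : \bar R :=
  cleanD Q [set z | f z.1 != z.2].

End PeerLoss.

From HB Require Import structures.
From mathcomp Require Import all_boot all_order all_algebra.
From mathcomp Require Import all_classical all_reals all_analysis.
From mathcomp Require Import ring lra.
Set Implicit Arguments. Unset Strict Implicit. Unset Printing Implicit Defensive.
Import Order.TTheory GRing.Theory Num.Theory.
Local Open Scope classical_set_scope.
Local Open Scope ring_scope.

(* The 0-1 peer loss of a classifier f depends only on the joint law b of
   (f X, label) on {-1,+1}^2: it is the disagreement probability under b minus
   the one under the product of the marginals of b.  Since the noisy label is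
   conditionally independent of X given Y, the noisy joint law is the clean one
   composed with the noise channel rho(y, z) = P(Ytilde = z | Y = y), and a
   direct computation shows that this multiplies the peer loss by
   1 - e_{-1} - e_{+1} > 0.  When p = 1/2 the clean peer loss is R_D(f) - 1/2,
   so minimising the noisy peer loss minimises R_D. *)

Section BinaryLaws.
Variable R : comPzRingType.
Implicit Types b rho : bool -> bool -> R.

Definition disagreement b : R := \sum_(t : bool) \sum_(z : bool) (t != z)%:R * b t z.

Definition marginal_product b t z : R :=
  (\sum_(z' : bool) b t z') * (\sum_(t' : bool) b t' z).

Definition peer_disagreement b : R := disagreement b - disagreement (marginal_product b).

Definition noisy_law b rho t z : R := \sum_(y : bool) b t y * rho y z.

Lemma peer_disagreement_noisy_law b rho :
  \sum_(t : bool) \sum_(y : bool) b t y = 1 -> (forall y, \sum_(z : bool) rho y z = 1) ->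
  peer_disagreement (noisy_law b rho) =
  (1 - rho false true - rho true false) * peer_disagreement b.
Proof.
move=> hb hrho.
have rho_false y : rho y false = 1 - rho y true by rewrite -(hrho y) big_bool /=; ring.
have b_ff : b false false = 1 - b true true - b true false - b false true.
  by rewrite -hb !big_bool /=; ring.
rewrite /peer_disagreement /disagreement /marginal_product /noisy_law !big_bool /=.
rewrite !rho_false b_ff; ring.
Qed.
End BinaryLaws.

Lemma peer_disagreement_balanced (R : numFieldType) (b : bool -> bool -> R) :
  (forall y, \sum_(t : bool) b t y = 2^-1) -> peer_disagreement b = disagreement b - 2^-1.
Proof.
move=> hb; have b_false y : b false y = 2^-1 - b true y by rewrite -(hb y) big_bool /=; ring.
rewrite /peer_disagreement /disagreement /marginal_product !big_bool /= !b_false.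
by field.
Qed.

Lemma indic_bool_event (R : numDomainType) (U : Type) (k : U -> bool) (u : U) :
  \1_[set u | k u] u = (k u)%:R :> R.
Proof.
rewrite indicE; case: (boolP (k u)) => ku; first by rewrite mem_set.
by rewrite memNset //; apply/negP.
Qed.

Section BoolEvents.
Context (R : realType) (d : measure_display) (U : measurableType d).

Lemma measurable_bool_event (g : U -> bool) (b : bool) :
  measurable_fun setT g -> measurable [set u | g u = b].
Proof. by move=> mg; rewrite -[X in measurable X]setTI; apply: (mg measurableT [set b]). Qed.

Definition joint_law (P : set U -> \bar R) (g h : U -> bool) (t z : bool) : R :=
  fine (P [set u | g u = t /\ h u = z]).

Variables g h : U -> bool.
Hypotheses (mg : measurable_fun setT g) (mh : measurable_fun setT h).

Lemma measurable_fun_bool_pred (pred : bool -> bool -> bool) :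
  measurable_fun setT (fun u => pred (g u) (h u)).
Proof.
rewrite (_ : (fun u => _) = fun u => if g u
  then (if h u then pred true true else pred true false)
  else (if h u then pred false true else pred false false)).
  by do 2 apply: measurable_fun_ifT => //.
by apply/funext => u; case: (g u); case: (h u).
Qed.

Lemma measurable_bool_pred_event (pred : bool -> bool -> bool) :
  measurable [set u | pred (g u) (h u)].
Proof. exact: measurable_bool_event true (measurable_fun_bool_pred pred). Qed.

Variable P : {finite_measure set U -> \bar R}.

Lemma fine_measure_sum_bool (A : set U) (k : U -> bool) :
  measurable A -> measurable_fun setT k ->
  fine (P A) = \sum_(b : bool) fine (P (A `&` [set u | k u = b])).
Proof.
move=> mA mk.
have mAk b : measurable (A `&` [set u | k u = b]).
  by apply: measurableI => //; exact: measurable_bool_event.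
rewrite big_bool /= -fineD ?fin_num_measure // -measureU //; last first.
  by apply/seteqP; split => u //= [[_ ->] []].
rewrite -setIUr; congr (fine (P _)); apply/seteqP; split => u /=; last by case.
by move=> Au; split=> //; case: (k u); [left | right].
Qed.

Lemma fine_measure_bool_pred (pred : bool -> bool -> bool) :
  fine (P [set u | pred (g u) (h u)]) =
  \sum_(t : bool) \sum_(z : bool) (pred t z)%:R * joint_law P g h t z.
Proof.
rewrite (fine_measure_sum_bool (measurable_bool_pred_event pred) mg).
apply: eq_bigr => t _.
rewrite (fine_measure_sum_bool _ mh); last first.
  exact: measurableI _ _ (measurable_bool_pred_event pred) (measurable_bool_event _ mg).
apply: eq_bigr => z _; rewrite /joint_law -setIA.
case ptz : (pred t z); [rewrite mul1r | rewrite mul0r].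
  by congr (fine (P _)); apply/seteqP; split => u /=; [case | case=> -> ->].
rewrite (_ : _ `&` _ = set0) ?measure0 //.
by apply/seteqP; split => u //= [+ [gt hz]]; rewrite gt hz ptz.
Qed.

Lemma joint_law_sum_snd t :
  \sum_(z : bool) joint_law P g h t z = fine (P [set u | g u = t]).
Proof. by rewrite (fine_measure_sum_bool (measurable_bool_event _ mg) mh). Qed.

Lemma joint_law_sum_fst z :
  \sum_(t : bool) joint_law P g h t z = fine (P [set u | h u = z]).
Proof.
rewrite (fine_measure_sum_bool (measurable_bool_event _ mh) mg).
by apply: eq_bigr => t _; rewrite setIC.
Qed.

End BoolEvents.

Lemma joint_law_sum1 (R : realType) (d : measure_display) (U : measurableType d)
    (P : probability U R) (g h : U -> bool) :
  measurable_fun setT g -> measurable_fun setT h ->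
  \sum_(t : bool) \sum_(z : bool) joint_law P g h t z = 1.
Proof.
move=> mg mh; under eq_bigr do rewrite joint_law_sum_snd //.
rewrite -[1]/(fine 1%:E) -(probability_setT P) (fine_measure_sum_bool _ measurableT mg).
by under [RHS]eq_bigr do rewrite setTI.
Qed.

Section LossIntegrals.
Context (R : realType) (d : measure_display) (T : measurableType d).
Variable f : T -> bool.
Hypothesis mf : measurable_fun setT f.

Let mf1 : measurable_fun setT (fun z : T * bool => f z.1).
Proof. exact: measurableT_comp mf measurable_fst. Qed.

Lemma integral_loss01 (mu : {measure set (T * bool)%type -> \bar R}) :
  (\int[mu]_z (loss01 R (f z.1) z.2)%:E = mu [set z | f z.1 != z.2])%E.
Proof.
rewrite -(setIT [set z | f z.1 != z.2]) -integral_indic //; last first.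
  exact: (measurable_bool_pred_event mf1 measurable_snd (fun a b => a != b)).
by apply: eq_integral => z _; rewrite indic_bool_event.
Qed.

Lemma integral_loss01_product (mu1 : {measure set (T * bool)%type -> \bar R})
    (mu2 : {sigma_finite_measure set (T * bool)%type -> \bar R}) :
  (\int[mu1 \x mu2]_zz (loss01 R (f zz.1.1) zz.2.2)%:E =
   mu1 [set z | f z.1 = true] * mu2 [set z | z.2 = false] +
   mu1 [set z | f z.1 = false] * mu2 [set z | z.2 = true])%E.
Proof.
have mF t : measurable [set z : (T * bool)%type | f z.1 = t] by exact: measurable_bool_event.
have mL t : measurable [set z : (T * bool)%type | z.2 = t] by exact: measurable_bool_event.
have -> : (fun zz : (T * bool) * (T * bool) => (loss01 R (f zz.1.1) zz.2.2)%:E) =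
    (fun zz => (\1_([set z | f z.1 = true] `*` [set z | z.2 = false] `|`
                    [set z | f z.1 = false] `*` [set z | z.2 = true]) zz)%:E).
  apply/funext => zz; congr (_%:E).
  rewrite [in RHS](_ : _ `|` _ = [set zz | f zz.1.1 != zz.2.2]).
    by rewrite indic_bool_event.
  apply/seteqP; split => -[[x y] [x2 y2]] /=.
    by case=> -[-> ->].
  by case: (f x); case: y2 => //= _; [left | right].
rewrite integral_indic // ?setIT; last by apply: measurableU; exact: measurableX.
rewrite measureU; try exact: measurableX; last first.
  by apply/seteqP; split => -[[x y] [x2 y2]] //= [[-> _] []].
by congr (_ + _)%E; exact: product_measure1E.
Qed.

Lemma peer_loss_joint_law (P : probability (T * bool)%type R) :
  (\int[P]_z (loss01 R (f z.1) z.2)%:E -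
   \int[P \x P]_zz (loss01 R (f zz.1.1) zz.2.2)%:E)%E =
  (peer_disagreement (joint_law P (fun z => f z.1) snd))%:E.
Proof.
have finE A : measurable A ->
    (P : {measure set (T * bool)%type -> \bar R}) A = (fine (P A))%:E.
  by move=> mA; rewrite fineK ?fin_num_measure.
have mF t := measurable_bool_event t mf1.
have mL t := measurable_bool_event t (@measurable_snd _ _ T bool).
have mD : measurable [set z : (T * bool)%type | f z.1 != z.2] :=
  measurable_bool_pred_event mf1 measurable_snd (fun a b => a != b).
rewrite integral_loss01 integral_loss01_product (finE _ mD).
rewrite (finE _ (mF true)) (finE _ (mF false)) (finE _ (mL true)) (finE _ (mL false)).
rewrite -!EFinM -EFinD; congr (_%:E).
rewrite (fine_measure_bool_pred mf1 measurable_snd P (fun a b => a != b)).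
rewrite -!(joint_law_sum_snd mf1 measurable_snd P) -!(joint_law_sum_fst mf1 measurable_snd P).
rewrite /peer_disagreement; congr (_ - _).
by rewrite /disagreement /marginal_product !big_bool /=; ring.
Qed.
End LossIntegrals.

Section NoisyLabels.
Context (R : realType) (d : measure_display) (T : measurableType d).
Variable Q : probability (T * (bool * bool))%type R.

Let mY : measurable_fun setT (fun w : T * (bool * bool) => w.2.1).
Proof. exact: measurableT_comp measurable_fst measurable_snd. Qed.

Let mYn : measurable_fun setT (fun w : T * (bool * bool) => w.2.2).
Proof. exact: measurableT_comp measurable_snd measurable_snd. Qed.

(* [e_plus Q] and [e_minus Q] are [noise_rate true false] and
   [noise_rate false true] by conversion. *)
Definition noise_rate (y z : bool) : R :=
  joint_law Q (fun w => w.2.1) (fun w => w.2.2) y z / fine (Q [set w | w.2.1 = y]).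

Lemma noise_rate_sum1 y : fine (Q [set w | w.2.1 = y]) != 0 ->
  \sum_(z : bool) noise_rate y z = 1.
Proof. by move=> hy; rewrite -mulr_suml joint_law_sum_snd // mulfV. Qed.

Lemma label_prob_half : prob_pos Q = (2^-1)%:E ->
  forall y, fine (Q [set w | w.2.1 = y]) = 2^-1.
Proof.
move=> hp; have htrue : fine (Q [set w | w.2.1 = true]) = 2^-1.
  by rewrite -/(prob_pos Q) hp.
have htotal : fine (Q setT) = 1 by rewrite probability_setT.
case=> //; have := fine_measure_sum_bool Q measurableT mY.
by rewrite big_bool /= !setTI htrue htotal => ?; lra.
Qed.

Variable f : T -> bool.
Hypothesis mf : measurable_fun setT f.

Let mfX : measurable_fun setT (fun w : T * (bool * bool) => f w.1).
Proof. exact: measurableT_comp mf measurable_fst. Qed.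

Definition clean_joint_law : bool -> bool -> R :=
  joint_law Q (fun w => f w.1) (fun w => w.2.1).

Lemma clean_riskE : clean_risk Q f = (disagreement clean_joint_law)%:E.
Proof.
rewrite /clean_risk (_ : cleanD Q _ = Q [set w | f w.1 != w.2.1]) //.
rewrite /disagreement -(fine_measure_bool_pred mfX mY Q (fun a b => a != b)) fineK //.
apply: fin_num_measure; exact: (measurable_bool_pred_event mfX mY (fun a b => a != b)).
Qed.

Hypothesis hci : cond_indep Q.

Section PositiveLabelProbabilities.
Hypothesis hY : forall y, fine (Q [set w | w.2.1 = y]) != 0.

Lemma noisy_joint_law :
  joint_law Q (fun w => f w.1) (fun w => w.2.2) = noisy_law clean_joint_law noise_rate.
Proof.
apply/funext => t; apply/funext => z.
rewrite /joint_law (fine_measure_sum_bool Q _ mY); last first.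
  by apply: measurableI; exact: measurable_bool_event.
apply: eq_bigr => y _.
have := congr1 fine (hci y z (measurable_bool_event t mf)).
rewrite !fineM ?fin_num_measure //; last 4 first.
- exact: measurableI _ _ (measurable_bool_event t mfX) (measurable_bool_event y mY).
- exact: measurableI _ _ (measurable_bool_event y mY) (measurable_bool_event z mYn).
- exact: measurableI _ _ (measurable_bool_event t mfX)
    (measurableI _ _ (measurable_bool_event y mY) (measurable_bool_event z mYn)).
- exact: measurable_bool_event.
rewrite [_ `&` _](_ : _ = [set w | f w.1 = t /\ w.2.1 = y /\ w.2.2 = z]).
  by move=> ci; rewrite /noise_rate mulrA -ci mulfK.
by apply/seteqP; split => w /= [] => [[-> ->] -> | -> [-> ->]].
Qed.

Lemma peer_risk_noisy :
  peer_risk Q f = ((1 - e_minus Q - e_plus Q) * peer_disagreement clean_joint_law)%:E.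
Proof.
rewrite /peer_risk peer_loss_joint_law //.
rewrite [joint_law _ _ _]noisy_joint_law peer_disagreement_noisy_law //.
- exact: joint_law_sum1.
- by move=> y; apply: noise_rate_sum1.
Qed.

End PositiveLabelProbabilities.

Lemma peer_risk_balanced : prob_pos Q = (2^-1)%:E ->
  peer_risk Q f = ((1 - e_minus Q - e_plus Q) * (disagreement clean_joint_law - 2^-1))%:E.
Proof.
move=> hp; have hY := label_prob_half hp.
rewrite peer_risk_noisy => [|y]; last by rewrite hY.
by rewrite peer_disagreement_balanced // => y; rewrite joint_law_sum_fst ?hY.
Qed.

End NoisyLabels.

Theorem theorem2 (R : realType) (d : measure_display) (T : measurableType d)
  (Q : probability (T * (bool * bool))%type R)
  (hci : cond_indep Q)
  (hp : prob_pos Q = (2^-1)%:E)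
  (he : e_minus Q + e_plus Q < 1)
  (F : set (T -> bool))
  (hF : forall f, F f -> measurable_fun setT f)
  (fstar : T -> bool) (hfs : F fstar)
  (hmin : forall f, F f -> (peer_risk Q fstar <= peer_risk Q f)%E) :
  forall f, F f -> (clean_risk Q fstar <= clean_risk Q f)%E.
Proof.
move=> f Ff; have := hmin f Ff.
have mfs := hF _ hfs; have mf := hF _ Ff.
rewrite !peer_risk_balanced // !clean_riskE // !lee_fin ler_pM2l ?lerD2r //.
lra.
Qed.
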